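(* Let $k$ be a positive integer, $q=4^k$, and $\Lambda:=\mathbb{F}_{4^k}\setminus\{-1,-\xi,-\xi^2\}$ (note $-1=1$ in characteristic $2$). Then $$\sum_{a\in\Lambda}\left[\eta\Big(\frac{a^2+a+1}{a^2+1}\Big)+\eta^2\Big(\frac{a^2+a+1}{a^2+1}\Big)\right]=-2+(-2)^{k+1}.$$
   Context: Here $q=4^k\equiv 1\pmod 3$. Let $\xi\in\mathbb{F}_q$ be a fixed cube root of unity with $\xi\neq 1$, and let $\delta\in\mathbb{C}$ be a fixed cube root of unity with $\delta\neq1$. Let $\eta:\mathbb{F}_q\to\mathbb{C}$ be the cubic multiplicative character defined by $\eta(0)=0$ and, for $c\in\mathbb{F}_q^*$ and integers $j$, $\eta(c)=\delta^j$ if and only if $c^{\frac{q-1}{3}}=\xi^j$. We write $\eta^2(c)$ for $\eta(c)^2$. *)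

From HB Require Import structures.
From mathcomp Require Import all_boot all_order all_algebra all_field.
Set Implicit Arguments. Unset Strict Implicit. Unset Printing Implicit Defensive.
Import GRing.Theory Num.Theory.
Local Open Scope ring_scope.

(* Cubic multiplicative character eta : F -> algC, F finite with q = #|F|,
   xi a fixed nontrivial cube root of unity in F, delta one in algC:
   eta 0 = 0 and eta c = delta^j iff c^((q-1)/3) = xi^j.
   Since c^((q-1)/3) is a cube root of unity when q = 1 mod 3, it is one of
   1, xi, xi^2; we pick j in {0,1,2} accordingly (defaulting to 2). *)
Definition cubic_eta (F : finFieldType) (xi : F) (delta : algC) (c : F) : algC :=
  if c == 0 then 0
  else let e := c ^+ ((#|F| - 1) %/ 3)%N in
       if e == 1 then 1
       else if e == xi then delta
       else delta ^+ 2.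

From HB Require Import structures.
From mathcomp Require Import all_boot all_order all_algebra all_field.
From mathcomp Require Import ring zify.
Set Implicit Arguments. Unset Strict Implicit. Unset Printing Implicit Defensive.
Import GRing.Theory Num.Theory.
Local Open Scope ring_scope.

(* Let F be a field of order q = 4^k, Tr its absolute trace over F_2,
   psi t = (-1)^(Tr t) its canonical additive character, and N3 t the number
   of cube roots of t in F.  For t != 0, eta t + eta t ^ 2 equals N3 t - 1
   (2 on cubes, -1 on non-cubes).
   - The substitution a = 1 + 1/b maps {b | b != 0, b^2 + b + 1 != 0} onto
     Lambda and (a^2 + a + 1)/(a^2 + 1) to b^2 + b + 1, so the sum to compute
     is the sum of N3 (b^2 + b + 1) - 1 over those b.
   - Counting the pairs (b, c) with c^3 = b^2 + b + 1 in two ways, using that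
     y^2 + y = s has 1 + psi s solutions, shows that the sum of
     N3 (b^2 + b + 1) - 1 over all of F is S = sum_x psi (x^3); the excluded
     term b = 0 contributes 2, the terms with b^2 + b + 1 = 0 contribute 0.
   - Shifting x to x + z in S^2 and using the orthogonality of psi gives
     S^2 = 4q, so S = +-2^(k+1); since N3 only takes the values 0, 1, 3 we have
     S = 1 mod 3, which forces S = (-2)^(k+1). *)

Lemma sum_over_fibers (T T' : finType) (V : nmodType) (f : T -> T') (h : T' -> V) :
  \sum_x h (f x) = \sum_t h t *+ #|[set x | f x == t]|.
Proof.
rewrite (partition_big f xpredT) //; apply: eq_bigr => t _.
rewrite (eq_bigr (fun _ => h t)) => [|x /eqP <-//].
by rewrite -sumr_const; apply: eq_bigl => x; rewrite inE.
Qed.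

Lemma sum_card_fibers (T T' : finType) (f : T -> T') :
  \sum_t #|[set x | f x == t]| = #|T|.
Proof.
rewrite -sum1_card (eq_bigl xpredT) // (sum_over_fibers f (fun _ => 1%N)).
by apply: eq_bigr => t _; elim: #|_| => // m IH; rewrite mulrS -IH.
Qed.

Lemma card_set_sum (T : finType) (P : pred T) :
  #|[set x | P x]| = (\sum_x (P x : nat))%N.
Proof.
by rewrite -sum1_card big_mkcond /=; apply: eq_bigr => x _; rewrite inE; case: (P x).
Qed.

Lemma bounded_sum_saturated (T : finType) (A : {set T}) (f : T -> nat) c :
  (forall t, t \in A -> (f t <= c)%N) -> (c * #|A| <= \sum_(t in A) f t)%N ->
  forall t, t \in A -> f t = c.
Proof.
move=> f_le_c sum_ge t tA.
have sum_gaps : (\sum_(t in A) (c - f t) + \sum_(t in A) f t = c * #|A|)%N.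
  rewrite -big_split /= (eq_bigr (fun _ => c)) => [|i iA]; last by rewrite subnK ?f_le_c.
  by rewrite sum_nat_const mulnC.
have : (\sum_(t in A) (c - f t) == 0)%N.
  have : (\sum_(t in A) f t <= c * #|A|)%N by rewrite -sum_gaps leq_addl.
  by move: sum_gaps; lia.
rewrite sum_nat_eq0 => /forall_inP /(_ t tA); rewrite subn_eq0 => ge_c.
by apply/eqP; rewrite eqn_leq f_le_c.
Qed.

Lemma neg2_exp_mod3 j : exists L : int, (-2) ^+ j = 1 + 3 * L.
Proof.
elim: j => [|j [L hL]]; first by exists 0; rewrite expr0.
by exists (-1 - 2 * L); rewrite exprS hL; lia.
Qed.

Lemma cube_root_unity_eq (R : comNzRingType) (z : R) :
  GRing.lreg (z - 1) -> z ^+ 3 = 1 -> z ^+ 2 + z + 1 = 0.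
Proof.
move=> reg z3; apply: reg; rewrite mulr0.
have -> : (z - 1) * (z ^+ 2 + z + 1) = z ^+ 3 - 1 by ring.
by rewrite z3 subrr.
Qed.

Lemma card_roots (F : finFieldType) (P : {poly F}) :
  P != 0 -> (#|[set x | root P x]| < size P)%N.
Proof.
move=> nz; rewrite cardE; apply: max_poly_roots => //; last exact: enum_uniq.
by apply/allP => x; rewrite mem_enum inE.
Qed.

Section TraceChar2.

Variables (F : finFieldType) (n : nat).
Hypotheses (n_gt0 : (0 < n)%N) (cardF : #|F| = (2 ^ n)%N).

Lemma char2 : 2%N \in [pchar F].
Proof. exact: card_finPcharP cardF (isT : prime 2). Qed.

Let addrr := addrr_pchar2 char2.

Lemma addr_eq0_char2 (x y : F) : (x + y == 0) = (x == y).
Proof. by rewrite addr_eq0 oppr_pchar2 ?char2. Qed.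

Lemma exp2D i (x y : F) : (x + y) ^+ (2 ^ i) = x ^+ (2 ^ i) + y ^+ (2 ^ i).
Proof.
elim: i => [|i IH]; rewrite ?expn0 ?expr1 // expnSr !exprM IH.
by rewrite sqrrD mulrn_pchar ?char2 // addr0.
Qed.

Lemma frobenius_period (x : F) : x ^+ (2 ^ n) = x.
Proof. by rewrite -cardF expf_card. Qed.

Definition Tr (x : F) := \sum_(i < n) x ^+ (2 ^ i).

Lemma TrD x y : Tr (x + y) = Tr x + Tr y.
Proof. by rewrite /Tr -big_split; apply: eq_bigr => i _; rewrite exp2D. Qed.

Lemma Tr_sq x : Tr (x ^+ 2) = Tr x.
Proof.
rewrite /Tr; move: frobenius_period; case: n n_gt0 => // N _ period.
rewrite big_ord_recr big_ord_recl /= addrC; congr (_ + _).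
  by rewrite -exprM -expnS period expn0 expr1.
by apply: eq_bigr => i _; rewrite -exprM -expnS.
Qed.

Lemma Tr01 x : Tr x = 0 \/ Tr x = 1.
Proof.
have sqr_sum : Tr x ^+ 2 = Tr (x ^+ 2).
  rewrite /Tr (big_morph (fun y => y ^+ 2) (fun a b => exp2D 1 a b) (@expr0n F 2)).
  by apply: eq_bigr => i _; rewrite exprAC.
have : Tr x * (Tr x - 1) = 0 by rewrite mulrBr mulr1 -expr2 sqr_sum Tr_sq subrr.
by move/eqP; rewrite mulf_eq0 subr_eq0 => /orP[] /eqP; [left|right].
Qed.

Lemma Tr_artin_schreier y : Tr (y ^+ 2 + y) = 0.
Proof. by rewrite TrD Tr_sq addrr. Qed.

Lemma Tr0 : Tr 0 = 0.
Proof. by rewrite /Tr big1 // => i _; rewrite expr0n expn_eq0. Qed.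

Lemma Tr1 : ~~ odd n -> Tr 1 = 0.
Proof.
move=> n_even; rewrite /Tr (eq_bigr (fun _ => 1)) => [|i _]; last by rewrite expr1n.
by rewrite sumr_const card_ord -(even_halfK n_even) -muln2 mulrnA mulrn_pchar ?char2.
Qed.

(* The kernel of the trace is the root set of sum_i X^(2^i), of size at most
   2^(n-1); hence the trace is onto {0, 1}. *)
Definition trace_poly : {poly F} := \sum_(i < n) 'X^(2 ^ i).

Lemma trace_poly_neq0 : trace_poly != 0.
Proof.
apply/eqP => /(congr1 (fun p : {poly F} => p`_1)); rewrite coef0 /trace_poly coef_sum.
rewrite (bigD1 (Ordinal n_gt0)) //= big1 ?addr0 ?coefXn ?expn0.
  by move/eqP; rewrite oner_eq0.
move=> i /eqP ne; rewrite coefXn -[in 1%N](expn0 2) eqn_exp2l //.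
by case: eqP => // e; case: ne; apply: val_inj.
Qed.

Lemma card_Tr_kernel : (#|[set x | Tr x == 0%R]| <= 2 ^ n.-1)%N.
Proof.
have size_le : (size trace_poly <= (2 ^ n.-1).+1)%N.
  apply: leq_trans (size_sum _ _ _) _; apply/bigmax_leqP => i _.
  by rewrite size_polyXn ltnS leq_exp2l // -ltnS prednK.
have := leq_trans (card_roots trace_poly_neq0) size_le; rewrite ltnS.
apply: leq_trans; apply: subset_leq_card; apply/subsetP => x.
by rewrite !inE /root /trace_poly horner_sum (eq_bigr _ (fun i _ => hornerXn x _)).
Qed.

Lemma exists_Tr1 : exists u, Tr u = 1.
Proof.
have : (#|[set x | Tr x == 0%R]| < #|F|)%N.
  apply: leq_ltn_trans card_Tr_kernel _; rewrite cardF -(prednK n_gt0) expnS.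
  by rewrite mul2n -addnn -{1}(add0n (2 ^ _)%N) ltn_add2r expn_gt0.
case: (pickP (fun u => Tr u != 0)) => [u Tu | Tr_eq0].
  by move=> _; exists u; case: (Tr01 u) Tu => ->; rewrite ?eqxx.
suff -> : [set x | Tr x == 0%R] = setT by rewrite cardsT ltnn.
by apply/setP => x; rewrite !inE; move: (Tr_eq0 x) => /= /negbFE ->.
Qed.

Definition psi (t : F) : int := if Tr t == 0 then 1 else -1.

Lemma psiD s t : psi (s + t) = psi s * psi t.
Proof.
rewrite /psi TrD; case: (Tr01 s) => ->; case: (Tr01 t) => ->;
  by rewrite ?addr0 ?add0r ?addrr ?eqxx ?oner_eq0 ?mulr1 ?mul1r ?mulrNN.
Qed.

Lemma psi0 : psi 0 = 1. Proof. by rewrite /psi Tr0 eqxx. Qed.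

Lemma sum_psi_lin w : w != 0 -> \sum_x psi (x * w) = 0.
Proof.
move=> w_neq0; have [u Tu] := exists_Tr1.
have psiu : psi u = -1 by rewrite /psi Tu oner_eq0.
set S := \sum_x _; suff : S = - S by lia.
rewrite {1}/S (reindex_inj (addIr (u / w))) /= /S -sumrN.
by apply: eq_bigr => x _; rewrite mulrDl divfK // psiD psiu mulrN1.
Qed.

Definition card_AS (t : F) := #|[set y : F | y ^+ 2 + y == t]|.

Lemma card_AS_le2 t : (card_AS t <= 2)%N.
Proof.
rewrite /card_AS; case: (pickP (fun y => y ^+ 2 + y == t)) => [y0 Hy0 | none]; last first.
  by rewrite (eq_card0 (A := [set y | y ^+ 2 + y == t])) // => y; rewrite inE none.
apply: (@leq_trans #|[set y0; y0 + 1]|); last by rewrite cards2; case: (_ != _).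
apply: subset_leq_card; apply/subsetP => y; rewrite !inE => Hy.
have : (y + y0) * (y + y0 + 1) == 0.
  have -> : (y + y0) * (y + y0 + 1)
            = (y ^+ 2 + y) + (y0 ^+ 2 + y0) + (1 + 1) * (y * y0) by ring.
  by rewrite (eqP Hy) (eqP Hy0) !addrr mul0r addr0.
by rewrite mulf_eq0 -addrA !addr_eq0_char2.
Qed.

(* y^2 + y = t has two solutions if Tr t = 0 and none otherwise: the map
   y |-> y^2 + y is two-to-one onto the trace kernel. *)
Lemma card_AS_val t : card_AS t = if Tr t == 0 then 2%N else 0%N.
Proof.
have AS_empty x : Tr x != 0 -> card_AS x = 0%N.
  move=> Tx; rewrite /card_AS (eq_card0 (A := [set y | y ^+ 2 + y == x])) // => y.
  by rewrite inE; apply/negP => /eqP e; move: Tx; rewrite -e Tr_artin_schreier eqxx.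
case: eqP => [T0 | /eqP Tn0]; last exact: AS_empty.
have Kt : t \in [set x | Tr x == 0%R] by rewrite inE T0.
apply: (bounded_sum_saturated (A := [set x | Tr x == 0%R])) Kt => [x _|].
  exact: card_AS_le2.
have -> : (\sum_(x in [set x | Tr x == 0%R]) card_AS x = #|F|)%N.
  rewrite -(sum_card_fibers (fun y : F => y ^+ 2 + y)).
  rewrite [RHS](bigID (mem [set x | Tr x == 0%R])) /= [X in _ + X]big1 ?addr0 //.
  by move=> x; rewrite inE; apply: AS_empty.
rewrite cardF; apply: leq_trans (leq_mul (leqnn 2) card_Tr_kernel) _.
by rewrite -expnS prednK.
Qed.

End TraceChar2.

Section CubeRoots.

Variables (F : finFieldType) (xi : F).
Hypotheses (xi3 : xi ^+ 3 = 1) (xi_neq1 : xi != 1) (card_mod3 : (3 %| #|F| - 1)%N).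

Local Notation m := ((#|F| - 1) %/ 3)%N.

Lemma xi_neq0 : xi != 0.
Proof. by apply: contra_eq_neq xi3 => ->; rewrite expr0n eq_sym oner_neq0. Qed.

Lemma xi_root : xi ^+ 2 + xi + 1 = 0.
Proof. by apply: cube_root_unity_eq xi3; apply: mulfI; rewrite subr_eq0. Qed.

Lemma xi2_neq1 : xi ^+ 2 != 1.
Proof. by apply: contraNneq xi_neq1 => e; rewrite -xi3 exprS e mulr1. Qed.

Lemma cube_factor (y : F) : (y - 1) * (y - xi) * (y - xi ^+ 2) = y ^+ 3 - 1.
Proof.
have -> : (y - 1) * (y - xi) * (y - xi ^+ 2)
          = y ^+ 3 - xi ^+ 3 + (xi ^+ 2 + xi + 1) * (xi * y - y ^+ 2) by ring.
by rewrite xi_root mul0r addr0 xi3.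
Qed.

Lemma m_gt0 : (0 < m)%N.
Proof.
have card_gt1 : (1 < #|F|)%N.
  by apply/card_gt1P; exists 0, 1; rewrite !inE eq_sym oner_neq0.
by rewrite divn_gt0 // dvdn_leq // subn_gt0.
Qed.

Lemma fermat (x : F) : x != 0 -> x ^+ (#|F| - 1)%N = 1.
Proof.
move=> x_neq0; apply: (mulIf x_neq0); rewrite mul1r -exprSr subn1 prednK.
  exact: expf_card.
by apply/card_gt0P; exists x.
Qed.

Definition card_cbrt (t : F) := #|[set x : F | x ^+ 3 == t]|.

Lemma card_cbrt0 : card_cbrt 0 = 1%N.
Proof.
by rewrite /card_cbrt -(cards1 (0 : F)); apply: eq_card => x; rewrite !inE expf_eq0.
Qed.

(* The cube roots of t = x0^3 are x0, x0 * xi and x0 * xi^2. *)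
Lemma card_cbrt_le3 t : t != 0 -> (card_cbrt t <= 3)%N.
Proof.
move=> t_neq0; rewrite /card_cbrt.
case: (pickP (fun x => x ^+ 3 == t)) => [x0 Hx0 | none]; last first.
  by rewrite (eq_card0 (A := [set x | x ^+ 3 == t])) // => y; rewrite inE none.
have x0_neq0 : x0 != 0 by apply: contraNneq t_neq0 => e; rewrite -(eqP Hx0) e expr0n.
apply: (@leq_trans #|[set x0; x0 * xi; x0 * xi ^+ 2]|).
  apply: subset_leq_card; apply/subsetP => x; rewrite !inE => Hx.
  have : (x / x0 - 1) * (x / x0 - xi) * (x / x0 - xi ^+ 2) == 0.
    by rewrite cube_factor expr_div_n (eqP Hx) (eqP Hx0) divff // subrr.
  rewrite !mulf_eq0 !subr_eq0 !(can2_eq (divfK x0_neq0) (mulfK x0_neq0)).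
  by rewrite mul1r (mulrC xi) (mulrC (xi ^+ 2)).
apply: leq_trans (leq_card_setU _ _) _; rewrite cardsU1 !cards1.
by case: (_ \notin _).
Qed.

Lemma card_cbrt_pos t : t != 0 -> (0 < card_cbrt t)%N -> t ^+ m = 1.
Proof.
move=> t_neq0; rewrite /card_cbrt card_gt0 => /set0Pn [x]; rewrite inE => /eqP x3.
have x_neq0 : x != 0 by apply: contraNneq t_neq0 => x0; rewrite -x3 x0 expr0n.
by rewrite -x3 -exprM mulnC divnK // fermat.
Qed.

Lemma card_unity_roots : (#|[set t : F | t ^+ m == 1%R]| <= m)%N.
Proof.
have nz : ('X^m - 1%:P : {poly F}) != 0 by rewrite -size_poly_eq0 size_XnsubC ?m_gt0.
have := card_roots nz; rewrite size_XnsubC ?m_gt0 // ltnS.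
apply: leq_trans; apply: subset_leq_card; apply/subsetP => t.
by rewrite !inE /root !hornerE subr_eq0.
Qed.

(* Every nonzero cube has exactly three cube roots: the q - 1 nonzero
   elements are distributed among at most m cubes, at most three each. *)
Lemma card_cbrt_val t : t != 0 -> card_cbrt t = if t ^+ m == 1 then 3%N else 0%N.
Proof.
move=> t_neq0; case: eqP => [tm | /eqP tm]; last first.
  by case: (posnP (card_cbrt t)) => // /(card_cbrt_pos t_neq0) /eqP; rewrite (negbTE tm).
pose U := [set t : F | t ^+ m == 1%R].
have Ut : t \in U by rewrite inE tm.
have U0 : (0 : F) \notin U by rewrite inE expr0n eqn0Ngt m_gt0 eq_sym oner_eq0.
apply: (bounded_sum_saturated (A := U)) Ut => [x xU|].
  by apply: card_cbrt_le3; apply: contraNneq U0 => <-.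
have -> : (\sum_(x in U) card_cbrt x = #|F| - 1)%N.
  have := sum_card_fibers (fun x : F => x ^+ 3).
  rewrite (bigID (mem U)) /= [X in _ + X](bigD1 0) //= [X in _ + (_ + X)]big1.
    by rewrite -/(card_cbrt 0) card_cbrt0 addr0 => <-; rewrite addnK.
  move=> x /andP[xU x_neq0]; apply/eqP; rewrite -leqn0 leqNgt.
  by apply: contraNN xU => /(card_cbrt_pos x_neq0) xm; rewrite inE xm.
apply: leq_trans (leq_mul (leqnn 3) card_unity_roots) _.
by rewrite mulnC divnK.
Qed.

(* For t != 0, eta t + eta t ^ 2 counts the cube roots of t, minus one:
   it is 1 + 1 = 2 on cubes and delta + delta^2 = -1 otherwise. *)
Lemma cubic_eta_sum (delta : algC) : delta ^+ 3 = 1 -> delta != 1 ->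
  forall t : F, t != 0 ->
  cubic_eta xi delta t + (cubic_eta xi delta t) ^+ 2 = (card_cbrt t)%:R - 1.
Proof.
move=> delta3 delta_neq1 t t_neq0.
have delta_root : delta ^+ 2 + delta + 1 = 0.
  by apply: cube_root_unity_eq delta3; apply: mulfI; rewrite subr_eq0.
rewrite /cubic_eta (negbTE t_neq0) /= card_cbrt_val //.
case: eqP => _; first by rewrite expr1n; ring.
have conj_sum : delta + delta ^+ 2 = -1.
  have -> : delta + delta ^+ 2 = (delta ^+ 2 + delta + 1) - 1 by ring.
  by rewrite delta_root sub0r.
have delta4 : (delta ^+ 2) ^+ 2 = delta by rewrite -exprM exprS delta3 mulr1.
by case: eqP => _; last rewrite delta4 addrC; rewrite conj_sum sub0r.
Qed.

End CubeRoots.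

Section CubicCharacterSum.

Variables (k : nat) (F : finFieldType) (xi : F).
Hypotheses (k_gt0 : (0 < k)%N) (cardF : #|F| = (4 ^ k)%N)
           (xi3 : xi ^+ 3 = 1) (xi_neq1 : xi != 1).

Local Notation n := (2 * k)%N.

Let n_gt0 : (0 < n)%N. Proof. by rewrite muln_gt0. Qed.
Let cardF2 : #|F| = (2 ^ n)%N. Proof. by rewrite cardF expnM. Qed.
Lemma card_mod3 : (3 %| #|F| - 1)%N.
Proof. by rewrite cardF -eqn_mod_dvd ?expn_gt0 // -modnXm (_ : 4 %% 3 = 1)%N // exp1n. Qed.
Let addrr := addrr_pchar2 (char2 cardF2).

Definition cubic_sum : int := \sum_(x : F) psi n (x ^+ 3).

(* Shift identity: psi (x^3) psi ((x + z)^3) = psi (x * w z) psi (z^3), where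
   w z = z^(2^(n-1)) + z^2 comes from moving the square in psi (x^2 z). *)
Definition shift_weight (z : F) := z ^+ (2 ^ n.-1) + z ^+ 2.

Lemma psi_shift x z :
  psi n (x ^+ 3) * psi n ((x + z) ^+ 3) = psi n (x * shift_weight z) * psi n (z ^+ 3).
Proof.
have cube_sum : x ^+ 3 + (x + z) ^+ 3 = x ^+ 2 * z + x * z ^+ 2 + z ^+ 3.
  have -> : x ^+ 3 + (x + z) ^+ 3 = x ^+ 2 * z + x * z ^+ 2 + z ^+ 3
            + (1 + 1) * (x ^+ 3 + x ^+ 2 * z + x * z ^+ 2) by ring.
  by rewrite addrr mul0r addr0.
rewrite -psiD // cube_sum !psiD // /shift_weight mulrDr psiD //; congr (_ * _ * _).
have -> : x ^+ 2 * z = (x * z ^+ (2 ^ n.-1)) ^+ 2.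
  by rewrite exprMn -exprM mulnC -expnS prednK // frobenius_period.
by rewrite /psi Tr_sq.
Qed.

Lemma shift_weight_eq0 z : (shift_weight z == 0) = (z ^+ 4 == z).
Proof.
rewrite /shift_weight (addr_eq0_char2 cardF2); apply/eqP/eqP => [e | e].
  have := congr1 (fun y => y ^+ 2) e; rewrite -!exprM -expnSr prednK //.
  by rewrite frobenius_period // => h; rewrite {2}h.
have -> : n.-1 = (2 * k.-1).+1 by case: k k_gt0 => // K _; rewrite mulnS.
elim: k.-1 => [|j IH]; first by rewrite muln0 expn1.
have -> : ((2 * j.+1).+1 = (2 * j).+1 + 2)%N by lia.
by rewrite expnD exprM IH -exprM mulnC exprM e.
Qed.

Definition F4 : seq F := [:: 0; 1; xi; xi ^+ 2].

Lemma F4_roots z : (z ^+ 4 == z) = (z \in F4).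
Proof.
have -> : (z ^+ 4 == z) = (z * ((z - 1) * (z - xi) * (z - xi ^+ 2)) == 0).
  by rewrite cube_factor // mulrBr mulr1 -exprS subr_eq0.
by rewrite !mulf_eq0 !subr_eq0 !inE !orbA.
Qed.

Lemma uniq_F4 : uniq F4.
Proof.
have xi_neq0 := xi_neq0 xi3.
have xi2_neqxi : xi ^+ 2 != xi.
  apply: contraNneq xi_neq1 => e; apply/eqP; apply: (mulfI xi_neq0).
  by rewrite mulr1 -expr2 e.
rewrite /= !inE !negb_or !andbT eq_sym oner_eq0 eq_sym xi_neq0 eq_sym.
by rewrite (expf_neq0 _ xi_neq0) eq_sym xi_neq1 eq_sym (xi2_neq1 xi3 xi_neq1) eq_sym xi2_neqxi.
Qed.

(* S^2 = sum_z psi (z^3) sum_x psi (x * w z): only the four z in F_4 survive,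
   each contributing q, so S^2 = 4q. *)
Lemma cubic_sum_sqr : cubic_sum * cubic_sum = 4 * #|F|%:Z.
Proof.
rewrite /cubic_sum mulr_suml.
rewrite (eq_bigr (fun x => \sum_z psi n (x * shift_weight z) * psi n (z ^+ 3))); last first.
  move=> x _; rewrite mulr_sumr (reindex_inj (addrI x)) /=.
  by apply: eq_bigr => z _; rewrite psi_shift.
rewrite exchange_big /=.
rewrite (eq_bigr (fun z => if z \in F4 then #|F|%:Z else 0)); last first.
  move=> z _; rewrite -mulr_suml -F4_roots -shift_weight_eq0.
  case: eqP => [w0 | /eqP w_neq0]; last by rewrite sum_psi_lin // mul0r.
  under eq_bigr do rewrite w0 mulr0 psi0.
  rewrite sumr_const -natz; move: w0 => /eqP; rewrite shift_weight_eq0 F4_roots !inE.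
  have psi1 : psi n (1 : F) = 1 by rewrite /psi (Tr1 cardF2) ?eqxx // oddM.
  case/or4P => /eqP ->; rewrite ?expr0n ?expr1n ?psi0 ?psi1 ?mulr1 //;
    by rewrite ?(exprAC xi 2 3) xi3 ?expr1n psi1 mulr1.
rewrite (bigID (mem F4)) /= [X in _ + X]big1 ?addr0; last by move=> i /negbTE ->.
rewrite (eq_bigr (fun _ => #|F|%:Z)) => [|i ->//]; rewrite sumr_const.
by rewrite (card_uniqP uniq_F4) mulr_natl.
Qed.

(* Grouping x by t = x^3 gives S = 1 + sum_(t != 0) N3 t psi t, and N3 t is
   0 or 3 for t != 0. *)
Lemma cubic_sum_mod3 : exists K : int, cubic_sum = 1 + 3 * K.
Proof.
exists (\sum_(t : F | t != 0) (if t ^+ ((#|F| - 1) %/ 3) == 1 then psi n t else 0)).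
rewrite /cubic_sum (sum_over_fibers (fun x : F => x ^+ 3) (psi n)) (bigD1 0) //=.
rewrite -/(card_cbrt 0) card_cbrt0 psi0; congr (_ + _); rewrite mulr_sumr.
apply: eq_bigr => t t_neq0; rewrite -/(card_cbrt t) (card_cbrt_val xi3 xi_neq1 card_mod3) //.
by case: (_ == _); rewrite ?mulr0 // mulrC mulr_natr.
Qed.

Lemma cubic_sum_val : cubic_sum = (-2) ^+ k.+1.
Proof.
have sq : cubic_sum * cubic_sum = (-2) ^+ k.+1 * (-2) ^+ k.+1.
  rewrite cubic_sum_sqr -exprMn mulrNN -natz cardF natrX exprS.
  by congr (_ * _); rewrite -exprMn.
have : (cubic_sum - (-2) ^+ k.+1) * (cubic_sum + (-2) ^+ k.+1) = 0.
  by rewrite -subr_sqr !expr2 sq subrr.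
move/eqP; rewrite mulf_eq0 subr_eq0 addr_eq0 => /orP[/eqP // | /eqP e].
have [K hK] := cubic_sum_mod3; have [L hL] := neg2_exp_mod3 k.+1.
by move: e; rewrite hK hL; lia.
Qed.

Definition trinom (b : F) := b ^+ 2 + b + 1.

(* Counting the pairs (b, c) with c^3 = b^2 + b + 1 by b, or by c: for fixed
   c the equation reads b^2 + b = c^3 + 1. *)
Lemma double_count :
  (\sum_(b : F) card_cbrt (trinom b) = \sum_(c : F) card_AS (c ^+ 3 + 1)%R)%N.
Proof.
rewrite /card_cbrt /card_AS.
under eq_bigr do rewrite card_set_sum.
rewrite exchange_big /=; apply: eq_bigr => c _; rewrite card_set_sum.
apply: eq_bigr => b _; congr nat_of_bool.
rewrite -(addr_eq0_char2 cardF2) -[RHS](addr_eq0_char2 cardF2) /trinom.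
by congr (_ == 0); ring.
Qed.

(* Since Tr 1 = 0 (n is even), y^2 + y = c^3 + 1 has 1 + psi (c^3) solutions. *)
Lemma card_AS_cube (c : F) : (card_AS (c ^+ 3 + 1)%R)%:Z = 1 + psi n (c ^+ 3).
Proof.
rewrite (card_AS_val n_gt0 cardF2) /psi TrD // (Tr1 cardF2) ?oddM // addr0.
by case: (_ == _).
Qed.

Lemma sum_trinom_cbrt : \sum_(b : F) ((card_cbrt (trinom b))%:Z - 1) = cubic_sum.
Proof.
have sumz := big_morph Posz PoszD (erefl (Posz 0)).
rewrite sumrB -sumz double_count sumz.
under eq_bigr do rewrite card_AS_cube.
by rewrite big_split /= !sumr_const /cubic_sum addrAC subrr add0r.
Qed.

(* The sum over b != 0 with b^2 + b + 1 != 0: the excluded terms are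
   N3 1 - 1 = 2 (for b = 0) and N3 0 - 1 = 0. *)
Lemma trinom_cbrt_count :
  \sum_(b | (b != 0) && (trinom b != 0)) ((card_cbrt (trinom b))%:Z - 1)
  = -2 + (-2) ^+ k.+1.
Proof.
transitivity (\sum_(b | b != 0) ((card_cbrt (trinom b))%:Z - 1)).
  rewrite [RHS](bigID (fun b => trinom b != 0)) /= [X in _ = _ + X]big1 ?addr0 //.
  by move=> b /andP[_]; rewrite negbK => /eqP ->; rewrite card_cbrt0 subrr.
have := sum_trinom_cbrt; rewrite (bigD1 0) //= cubic_sum_val.
have -> : trinom 0 = 1 by rewrite /trinom expr0n /= !add0r.
rewrite (card_cbrt_val xi3 xi_neq1 card_mod3) ?oner_eq0 // expr1n eqxx.
by set S := \sum_(i | _) _; set T := (-2) ^+ _; lia.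
Qed.

Definition shift_inv (b : F) := 1 + b^-1.

Lemma shift_inv_bij : bijective shift_inv.
Proof.
exists (fun a => (a + 1)^-1) => [b | a]; rewrite /shift_inv.
  by rewrite addrC addrA addrr add0r invrK.
by rewrite invrK addrC -addrA addrr addr0.
Qed.

(* shift_inv sends 0, xi, xi^2 to 1, xi, xi^2, so b avoids {0, xi, xi^2}
   exactly when shift_inv b lies in Lambda. *)
Lemma shift_inv_Lambda b :
  [&& shift_inv b != -1, shift_inv b != - xi & shift_inv b != - xi ^+ 2]
  = (b != 0) && (trinom b != 0).
Proof.
have fixed z : z ^+ 3 = 1 -> z != 1 -> shift_inv z = z.
  move=> z3 z_neq1; have z_root : z ^+ 2 + z + 1 = 0.
    by apply: cube_root_unity_eq z3; apply: mulfI; rewrite subr_eq0.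
  have z_neq0 : z != 0 by apply: contra_eq_neq z3 => ->; rewrite expr0n eq_sym oner_neq0.
  have zV : z^-1 = z ^+ 2 by apply: (mulfI z_neq0); rewrite mulfV // -exprS z3.
  apply/eqP; rewrite /shift_inv zV -(addr_eq0_char2 cardF2) -z_root.
  by have -> : 1 + z ^+ 2 + z = z ^+ 2 + z + 1 by ring.
have fixed_eq z : z ^+ 3 = 1 -> z != 1 -> (shift_inv b == z) = (b == z).
  by move=> z3 z_neq1; rewrite -{1}(fixed z) // (bij_eq shift_inv_bij).
have trinom_factor : trinom b = (b - xi) * (b - xi ^+ 2).
  have -> : (b - xi) * (b - xi ^+ 2)
            = trinom b - (xi ^+ 2 + xi + 1) * b + (xi ^+ 3 - 1) by rewrite /trinom; ring.
  by rewrite xi3 subrr (xi_root xi3 xi_neq1) mul0r subr0 addr0.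
have shift0 : (shift_inv b == 1) = (b == 0).
  by rewrite /shift_inv -subr_eq0 (addrC 1) addrK invr_eq0.
have xi2_cube : (xi ^+ 2) ^+ 3 = 1 by rewrite exprAC xi3 expr1n.
rewrite !(oppr_pchar2 (char2 cardF2)) shift0 !fixed_eq ?xi2_neq1 //.
by rewrite trinom_factor mulf_eq0 !subr_eq0 negb_or.
Qed.

(* (a^2 + a + 1)/(a^2 + 1) = b^2 + b + 1 for a = shift_inv b: with c = 1/b,
   the numerator is c^2 + c + 1 and the denominator c^2 in characteristic 2. *)
Lemma shift_inv_ratio b : b != 0 ->
  ((shift_inv b) ^+ 2 + shift_inv b + 1) / ((shift_inv b) ^+ 2 + 1) = trinom b.
Proof.
move=> b_neq0; rewrite /shift_inv /trinom; set c := b^-1.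
have -> : (1 + c) ^+ 2 + (1 + c) + 1 = c ^+ 2 + c + 1 + (1 + 1) * (1 + c) by ring.
have -> : (1 + c) ^+ 2 + 1 = c ^+ 2 + (1 + 1) * (1 + c) by ring.
by rewrite addrr mul0r !addr0 /c; field; rewrite b_neq0 oner_eq0.
Qed.

End CubicCharacterSum.

Theorem lemma4p4 (k : nat) (F : finFieldType) (xi : F) (delta : algC) :
  (0 < k)%N -> #|F| = (4 ^ k)%N ->
  xi ^+ 3 = 1 -> xi != 1 ->
  delta ^+ 3 = 1 -> delta != 1 ->
  \sum_(a : F | [&& a != -1, a != - xi & a != - xi ^+ 2])
     (cubic_eta xi delta ((a ^+ 2 + a + 1) / (a ^+ 2 + 1))
      + (cubic_eta xi delta ((a ^+ 2 + a + 1) / (a ^+ 2 + 1))) ^+ 2)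
  = -2 + (-2) ^+ k.+1.
Proof.
move=> k_gt0 cardF xi3 xi_neq1 delta3 delta_neq1.
have shift_bij := shift_inv_bij cardF.
rewrite (reindex (shift_inv (F := F))) /=; last exact: onW_bij.
rewrite (eq_bigl (fun b => (b != 0) && (trinom b != 0))) => [|b]; last first.
  exact: shift_inv_Lambda cardF xi3 xi_neq1 b.
rewrite (eq_bigr (fun b => ((card_cbrt (trinom b))%:Z - 1)%:~R)) => [|b /andP[b_neq0 trinom_neq0]].
  by rewrite -rmorph_sum (trinom_cbrt_count k_gt0 cardF xi3 xi_neq1) rmorphD rmorphXn rmorphN.
rewrite (shift_inv_ratio cardF) // (cubic_eta_sum xi3 xi_neq1 (card_mod3 cardF)) //.
by rewrite rmorphB /= rmorph1.
Qed.
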